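(* Let $q$ be a non-negative integer and $\Lambda$ a unital commutative ring which is $q$-torsion-free. Let $\mathfrak g$ be a Lie algebra over $\Lambda$ with free presentation $0\to\mathfrak r\to\mathfrak f\xrightarrow{\partial}\mathfrak g\to0$, let $\mathfrak c=\mathfrak f/(\mathfrak r\#_q\mathfrak f)$ and $\bar\partial\colon\mathfrak c\to\mathfrak g$ the map induced by $\partial$. Then for $c\in\mathfrak c$, $c\in Z(\mathfrak c)$ if and only if $\bar\partial(c)\in Z^{\curlywedge}_q(\mathfrak g)$.
   Context: All Lie algebras are over $\Lambda$; $Z(\mathfrak c)$ is the center of $\mathfrak c$. $\mathfrak r\#_q\mathfrak f$ is the $\Lambda$-submodule (an ideal) of $\mathfrak f$ generated by all $[r,f]$ and $qr'$ with $r,r'\in\mathfrak r$, $f\in\mathfrak f$. For $q\ge1$, the non-abelian $q$-exterior square $\mathfrak g\wedge^q\mathfrak g$ is the Lie algebra generated by symbols $h\wedge g$ and $\{h\}$ ($h,g\in\mathfrak g$) subject to, for all $h,h',g,g'\in\mathfrak g$, $\lambda,\lambda'\in\Lambda$: (1) $\lambda(h\wedge g)=\lambda h\wedge g=h\wedge\lambda g$; (2),(3) additivity in each variable; (4) $[h,h']\wedge g=h\wedge[h',g]-h'\wedge[h,g]$; (5) $h\wedge[g,g']=[g',h]\wedge g-[g,h]\wedge g'$; (6) $[h\wedge g,h'\wedge g']=[h,g]\wedge[h',g']$; (7) $[\{h'\},h\wedge g]=[qh',h]\wedge g+h\wedge[qh',g]$; (8) $\{\lambda h+\lambda'h'\}=\lambda\{h\}+\lambda'\{h'\}$;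 (9) $[\{h\},\{h'\}]=qh\wedge qh'$; (10) $\{[h,g]\}=q(h\wedge g)$; (11) $h\wedge h=0$. For $q=0$, generated by the $h\wedge g$ subject to (1)–(6) and (11). The $q$-exterior center in the sense of Ellis is $Z^{\curlywedge}_q(\mathfrak g)=\{g\in\mathfrak g\mid g\wedge x=0 \text{ in }\mathfrak g\wedge^q\mathfrak g\text{ for all }x\in\mathfrak g\}$. *)

From HB Require Import structures.
From mathcomp Require Import all_boot all_order all_algebra.
Set Implicit Arguments. Unset Strict Implicit. Unset Printing Implicit Defensive.
Import GRing.Theory.
Local Open Scope ring_scope.

Definition lie_axioms (R : pzRingType) (V : lmodType R) (br : V -> V -> V) : Prop :=
  [/\ (forall (a : R) (x y z : V), br (a *: x + y) z = a *: br x z + br y z),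
      (forall (a : R) (x y z : V), br z (a *: x + y) = a *: br z x + br z y),
      (forall x : V, br x x = 0) &
      (forall x y z : V, br x (br y z) + br y (br z x) + br z (br x y) = 0)].

Record lieAlgebra (R : pzRingType) := LieAlgebra {
  lie_sort :> lmodType R;
  lie_br : lie_sort -> lie_sort -> lie_sort;
  lie_ax : lie_axioms lie_br }.
Arguments lie_br {R l}.

Definition lie_hom (R : pzRingType) (L1 L2 : lieAlgebra R) (phi : L1 -> L2) : Prop :=
  (forall (a : R) (x y : L1), phi (a *: x + y) = a *: phi x + phi y) /\
  (forall x y : L1, phi (lie_br x y) = lie_br (phi x) (phi y)).

Definition is_free_lie (R : pzRingType) (X : Type) (F : lieAlgebra R) (i : X -> F) : Prop :=
  forall (L : lieAlgebra R) (phi : X -> L),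
    (exists psi : F -> L, lie_hom psi /\ forall x, psi (i x) = phi x) /\
    (forall psi1 psi2 : F -> L, lie_hom psi1 -> lie_hom psi2 ->
       (forall x, psi1 (i x) = psi2 (i x)) -> forall y, psi1 y = psi2 y).

(* Lambda is q-torsion-free: q*l = 0 implies l = 0.  For q = 0 the condition
   is taken to be vacuous. *)
Definition q_torsion_free (R : pzRingType) (q : nat) : Prop :=
  (0 < q)%N -> forall l : R, l *+ q = 0 -> l = 0.

Inductive span (R : pzRingType) (V : lmodType R) (S : V -> Prop) : V -> Prop :=
  | span_gen x : S x -> span S x
  | span_0 : span S 0
  | span_add x y : span S x -> span S y -> span S (x + y)
  | span_scale (a : R) x : span S x -> span S (a *: x).

Definition sharp_gens (R : pzRingType) (F : lieAlgebra R) (r : F -> Prop) (q : nat)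
  (x : F) : Prop :=
  (exists (s : F) (y : F), r s /\ x = lie_br s y) \/ (exists s : F, r s /\ x = s *+ q).

Definition sharp (R : pzRingType) (F : lieAlgebra R) (r : F -> Prop) (q : nat) : F -> Prop :=
  span (sharp_gens r q).

Definition lie_center (R : pzRingType) (L : lieAlgebra R) (z : L) : Prop :=
  forall y : L, lie_br z y = 0.

(* A q-exterior pairing of G into a Lie algebra L: images w h g of the
   generators h /\ g and b h of {h}, satisfying relations (1)-(11) of the
   definition of G /\^q G (for q = 0 only (1)-(6),(11) are imposed and b
   plays no role). *)
Definition qext_pairing (R : pzRingType) (q : nat) (G L : lieAlgebra R)
  (w : G -> G -> L) (b : G -> L) : Prop :=
  [/\ [/\ (forall (l : R) (h g : G), l *: w h g = w (l *: h) g /\ l *: w h g = w h (l *: g)),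
      (forall h h' g : G, w (h + h') g = w h g + w h' g),
                    (forall h g g' : G, w h (g + g') = w h g + w h g') &
      (forall h : G, w h h = 0)],
      (forall h h' g : G, w (lie_br h h') g = w h (lie_br h' g) - w h' (lie_br h g)),
      (forall h g g' : G, w h (lie_br g g') = w (lie_br g' h) g - w (lie_br g h) g'),
      (forall h g h' g' : G, lie_br (w h g) (w h' g') = w (lie_br h g) (lie_br h' g')) &
      ((0 < q)%N ->
      [/\ (forall h' h g : G, lie_br (b h') (w h g) =
                        w (lie_br (h' *+ q) h) g + w h (lie_br (h' *+ q) g)),
          (forall (l l' : R) (h h' : G), b (l *: h + l' *: h') = l *: b h + l' *: b h'),
          (forall h h' : G, lie_br (b h) (b h') = w (h *+ q) (h' *+ q)) &
          (forall h g : G, b (lie_br h g) = w h g *+ q)])].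

(* h /\ g = 0 in the presented Lie algebra G /\^q G iff its image vanishes
   under every q-exterior pairing into every Lie algebra over R. *)
Definition qext_zero (R : pzRingType) (q : nat) (G : lieAlgebra R) (h g : G) : Prop :=
  forall (L : lieAlgebra R) (w : G -> G -> L) (b : G -> L),
    qext_pairing q w b -> w h g = 0.

Definition qext_center (R : pzRingType) (q : nat) (G : lieAlgebra R) (g : G) : Prop :=
  forall x : G, qext_zero q g x.

From Pilot Require Import Defs.
From HB Require Import structures.
From mathcomp Require Import all_boot all_order all_algebra.
From Stdlib Require Import ClassicalEpsilon.
Import GRing.Theory.
Set Implicit Arguments. Unset Strict Implicit. Unset Printing Implicit Defensive.
Local Open Scope ring_scope.

(* Backward direction: through a set-theoretic section of d, the bracket of c
   induces a q-exterior pairing g x g -> c (well defined because c kills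
   r #_q f) whose value at (dbar z, d y) is [z, pi y]; so z is central as soon
   as dbar z is q-exterior central.
   Forward direction: for a q-exterior pairing (w, b) into L, w is an
   alternating 2-cocycle, so L x g with bracket (w, [-,-]) is a Lie algebra,
   and freeness lifts d to it; the first coordinate is a linear map
   phi : f -> L with phi [a, a'] = w (d a) (d a').  If z = pi z0 is central,
   then [z0, y] lies in r #_q f, i.e. [z0, y] = sum [s_k, y_k] + q s with
   s_k, s in r, whence w (d z0) (d y) = q phi s.  The map q phi - b o d is
   linear and kills brackets by relation (10); and q s in [f, f] forces
   s in [f, f], since f / [f, f] is the free module on X and Lambda has no
   q-torsion.  Hence q phi s = (q phi - b o d) s = 0. *)

Definition asbool (P : Prop) : bool :=
  if excluded_middle_informative P then true else false.

Lemma asboolP (P : Prop) : reflect P (asbool P).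
Proof. by rewrite /asbool; case: excluded_middle_informative => ?; constructor. Qed.

Definition classicType (T : Type) : Type := T.
HB.instance Definition _ (T : Type) :=
  hasDecEq.Build (classicType T) (fun x y : T => asboolP (x = y)).

Section Span.
Variables (R : pzRingType) (V : lmodType R).
Implicit Types S T : V -> Prop.

Lemma span_sub S T : (forall x, S x -> T x) -> forall x, Defs.span S x -> Defs.span T x.
Proof.
move=> ST x; elim=> [y /ST /span_gen // | | y z _ Ty _ Tz | a y _ Ty].
- exact: span_0.
- exact: span_add.
- exact: span_scale.
Qed.

Lemma spanB S x y : Defs.span S x -> Defs.span S y -> Defs.span S (x - y).
Proof. by move=> Sx Sy; apply: span_add => //; rewrite -scaleN1r; apply: span_scale. Qed.

Variables (W : lmodType R) (phi : V -> W).
Hypothesis phi_lin : linear phi.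
#[local] HB.instance Definition _ := GRing.isLinear.Build R V W *:%R phi phi_lin.

Lemma linear_span_eq0 S : (forall x, S x -> phi x = 0) -> forall x, Defs.span S x -> phi x = 0.
Proof.
move=> phiS x; elim=> [y /phiS //| |y z _ ey _ ez|a y _ ey].
- exact: raddf0.
- by rewrite raddfD /= ey ez addr0.
- by rewrite linearZ /= ey scaler0.
Qed.
End Span.

Lemma sum_scale_undup (R : pzRingType) (V : lmodType R) (X : eqType) (B : X -> V)
    (ls : seq (R * X)) :
  \sum_(p <- ls) p.1 *: B p.2 =
  \sum_(x <- undup (map snd ls)) (\sum_(p <- ls | p.2 == x) p.1) *: B x.
Proof.
under [RHS]eq_bigr => x _ do rewrite scaler_suml big_mkcond.
rewrite exchange_big [LHS]big_seq [RHS]big_seq; apply: eq_bigr => p p_ls.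
have p_U : p.2 \in undup (map snd ls) by rewrite mem_undup map_f.
rewrite (bigD1_seq p.2) ?undup_uniq //= eqxx big1 ?addr0 // => x.
by rewrite eq_sym => /negbTE ->.
Qed.

Section LieBracket.
Variables (R : pzRingType) (L : lieAlgebra R).
Implicit Types x y z : L.

Lemma lie_br_linear x : linear (lie_br x).
Proof. by case: (lie_ax L) => _ brr _ _ a y z; apply: brr. Qed.
HB.instance Definition _ x := GRing.isLinear.Build R L L *:%R (lie_br x) (lie_br_linear x).

Lemma lie_brDl x y z : lie_br (x + y) z = lie_br x z + lie_br y z.
Proof. by case: (lie_ax L) => brl _ _ _; have := brl 1 x y z; rewrite !scale1r. Qed.

Lemma lie_brxx x : lie_br x x = 0.
Proof. by case: (lie_ax L). Qed.

Lemma lie_br_anti x y : lie_br y x = - lie_br x y.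
Proof.
apply/eqP; rewrite -addr_eq0 addrC.
by have := lie_brxx (x + y); rewrite lie_brDl !raddfD /= !lie_brxx add0r addr0 => ->.
Qed.

Lemma lie_brZl a x y : lie_br (a *: x) y = a *: lie_br x y.
Proof. by rewrite lie_br_anti linearZ /= -scalerN -lie_br_anti. Qed.

Lemma lie_brNl x y : lie_br (- x) y = - lie_br x y.
Proof. by rewrite -scaleN1r lie_brZl scaleN1r. Qed.

Lemma lie_brBl x y z : lie_br (x - y) z = lie_br x z - lie_br y z.
Proof. by rewrite lie_brDl lie_brNl. Qed.

Lemma lie_br_leibniz x y z :
  lie_br x (lie_br y z) = lie_br (lie_br x y) z + lie_br y (lie_br x z).
Proof.
case: (lie_ax L) => _ _ _ /(_ x y z) /eqP; rewrite -addrA addr_eq0 => /eqP ->.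
by rewrite (lie_br_anti x z) (lie_br_anti (lie_br x y)) raddfN /= opprD !opprK addrC.
Qed.
End LieBracket.

Lemma lie_hom_comp (R : pzRingType) (L1 L2 L3 : lieAlgebra R)
    (f1 : L1 -> L2) (f2 : L2 -> L3) :
  lie_hom f1 -> lie_hom f2 -> lie_hom (fun x => f2 (f1 x)).
Proof.
by move=> [lin1 br1] [lin2 br2]; split=> [a x y|x y]; rewrite ?lin1 ?lin2 ?br1 ?br2.
Qed.

Section AbelianLie.
Variables (R : pzRingType) (V : lmodType R).

Lemma abelian_lie_axioms : lie_axioms (fun _ _ : V => 0).
Proof. by split=> *; rewrite ?scaler0 ?addr0. Qed.

Definition abelian_lie : lieAlgebra R := LieAlgebra abelian_lie_axioms.
End AbelianLie.

Section LieSubalgebra.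
Variables (R : pzRingType) (L : lieAlgebra R) (P : L -> Prop).
Hypotheses (P0 : P 0) (P_lin : forall a x y, P x -> P y -> P (a *: x + y))
  (P_br : forall x y, P x -> P y -> P (lie_br x y)).

Definition sub_mem : {pred L} := fun x => asbool (P x).

Fact sub_mem_closed : submod_closed sub_mem.
Proof.
split=> [|a x y /asboolP Px /asboolP Py]; apply/asboolP; [exact: P0 | exact: P_lin].
Qed.
HB.instance Definition _ :=
  GRing.isSubmodClosed.Build R L sub_mem (GRing.submod_closed_semi sub_mem_closed).

Inductive lie_sub : predArgType := LieSub x of x \in sub_mem.
Definition lie_sub_val (u : lie_sub) : L := let: LieSub x _ := u in x.
HB.instance Definition _ := [isSub of lie_sub for lie_sub_val].
HB.instance Definition _ := [Choice of lie_sub by <:].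
HB.instance Definition _ := [SubChoice_isSubZmodule of lie_sub by <:].
HB.instance Definition _ := [SubZmodule_isSubLmodule of lie_sub by <:].

Fact sub_mem_br x y : x \in sub_mem -> y \in sub_mem -> lie_br x y \in sub_mem.
Proof. by move=> /asboolP Px /asboolP Py; apply/asboolP; apply: P_br. Qed.

Definition lie_sub_br (u v : lie_sub) : lie_sub := LieSub (sub_mem_br (valP u) (valP v)).

Lemma lie_sub_axioms : lie_axioms lie_sub_br.
Proof.
case: (lie_ax L) => brl brr brxx jacobi.
by split=> *; apply: val_inj; [apply: brl | apply: brr | apply: brxx | apply: jacobi].
Qed.

Definition lie_subalgebra : lieAlgebra R := LieAlgebra lie_sub_axioms.

Lemma lie_sub_val_hom : lie_hom (lie_sub_val : lie_subalgebra -> L).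
Proof. by []. Qed.

Lemma lie_sub_valP (u : lie_subalgebra) : P (lie_sub_val u).
Proof. exact/asboolP/(valP u). Qed.
End LieSubalgebra.

Definition alt_cocycle (R : pzRingType) (G : lieAlgebra R) (L : lmodType R)
    (w : G -> G -> L) : Prop :=
  [/\ forall z, linear (w^~ z), forall z, linear (w z), forall x, w x x = 0 &
      forall x y z, w x (lie_br y z) + w y (lie_br z x) + w z (lie_br x y) = 0].

Section CentralExtension.
Variables (R : pzRingType) (G : lieAlgebra R) (L : lmodType R) (w : G -> G -> L).
Hypothesis w_cocycle : alt_cocycle w.

Definition ext_br (u v : L * G) : L * G := (w u.2 v.2, lie_br u.2 v.2).

Lemma ext_lie_axioms : lie_axioms ext_br.
Proof.
case: w_cocycle (lie_ax G) => wl wr walt wjac [brl brr brxx jacobi].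
split=> [a u v t|a u v t|u|u v t]; rewrite /ext_br /=.
- by rewrite wl brl.
- by rewrite wr brr.
- by rewrite walt brxx.
- by apply: injective_projections; [apply: wjac | apply: jacobi].
Qed.

Definition central_ext : lieAlgebra R := LieAlgebra ext_lie_axioms.

Lemma central_ext_snd_hom : lie_hom (snd : central_ext -> G).
Proof. by []. Qed.
End CentralExtension.

Definition lie_brackets (R : pzRingType) (L : lieAlgebra R) (A : L -> Prop) (x : L) : Prop :=
  exists s y, A s /\ x = lie_br s y.

Definition lie_derived (R : pzRingType) (L : lieAlgebra R) : L -> Prop :=
  Defs.span (lie_brackets (fun _ => True)).

Section FreeLieAlgebra.
Variables (R : pzRingType) (X : Type) (f : lieAlgebra R) (i : X -> f).
Hypothesis f_free : is_free_lie i.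

Definition free_lift (L : lieAlgebra R) (phi : X -> L) : f -> L :=
  proj1_sig (constructive_indefinite_description _ (f_free phi).1).

Lemma free_lift_hom (L : lieAlgebra R) (phi : X -> L) : lie_hom (free_lift phi).
Proof. by rewrite /free_lift; case: constructive_indefinite_description => ? []. Qed.

Lemma free_lift_gen (L : lieAlgebra R) (phi : X -> L) x : free_lift phi (i x) = phi x.
Proof. by rewrite /free_lift; case: constructive_indefinite_description => ? []. Qed.

Lemma free_lie_hom_eq (L : lieAlgebra R) (psi1 psi2 : f -> L) :
  lie_hom psi1 -> lie_hom psi2 -> (forall x, psi1 (i x) = psi2 (i x)) -> psi1 =1 psi2.
Proof. exact: (f_free (fun x => psi1 (i x))).2. Qed.

Lemma free_lie_ind (P : f -> Prop) :
  P 0 -> (forall a x y, P x -> P y -> P (a *: x + y)) ->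
  (forall x y, P x -> P y -> P (lie_br x y)) -> (forall x, P (i x)) ->
  forall s, P s.
Proof.
move=> P0 P_lin P_br P_gen s.
pose gen x : lie_subalgebra P0 P_lin P_br := LieSub (introT (asboolP _) (P_gen x)).
have val_lift : (fun s => lie_sub_val (free_lift gen s)) =1 id.
  apply: free_lie_hom_eq => // [|x].
  - exact: lie_hom_comp (free_lift_hom _) (lie_sub_val_hom _ _ _).
  - by rewrite free_lift_gen.
by rewrite -[s]val_lift; apply: lie_sub_valP.
Qed.

Lemma free_lie_mod_derived s :
  exists ls : seq (R * X), lie_derived (s - \sum_(p <- ls) p.1 *: i p.2).
Proof.
elim/free_lie_ind: s => [|a x y [lx dx] [ly dy]|x y _ _|x].
- by exists [::]; rewrite big_nil subr0; apply: span_0.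
- exists ([seq (a * p.1, p.2) | p <- lx] ++ ly).
  rewrite big_cat big_map /=.
  under eq_bigr => p _ do rewrite -scalerA.
  rewrite -scaler_sumr opprD addrACA -scalerBr.
  exact: span_add (span_scale _ dx) dy.
- by exists [::]; rewrite big_nil subr0; apply: span_gen; exists x, y.
- exists [:: (1, x)]; rewrite big_seq1 scale1r subrr; exact: span_0.
Qed.

Definition free_coord (x0 : X) : f -> R^o :=
  free_lift (L := abelian_lie R^o) (fun x => (asbool (x = x0))%:R).

Lemma free_coord_gen x0 x : free_coord x0 (i x) = (asbool (x = x0))%:R.
Proof. by rewrite /free_coord free_lift_gen. Qed.

Lemma free_coord_hom x0 : lie_hom (L2 := abelian_lie R^o) (free_coord x0).
Proof. exact: free_lift_hom. Qed.

HB.instance Definition _ x0 :=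
  GRing.isLinear.Build R f R^o *:%R (free_coord x0) (free_coord_hom x0).1.

Lemma free_coord_derived x0 s : lie_derived s -> free_coord x0 s = 0.
Proof.
apply: (linear_span_eq0 (phi := free_coord x0)) => [|_ [a [y [_ ->]]]].
- exact: (free_coord_hom x0).1.
- exact: (free_coord_hom x0).2.
Qed.

Lemma free_lie_derived_pure q : (0 < q)%N -> q_torsion_free R q ->
  forall s : f, lie_derived (s *+ q) -> lie_derived s.
Proof.
move=> q_gt0 q_tf s sq_derived.
have [ls s_ls] := free_lie_mod_derived s.
have coord_s x0 : free_coord x0 s = 0.
  by apply: q_tf q_gt0 _ _; rewrite -raddfMn; apply: free_coord_derived.
suff sum0 : \sum_(p <- ls) p.1 *: i p.2 = 0 by rewrite sum0 subr0 in s_ls.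
rewrite (sum_scale_undup (X := classicType X)) big1 // => x _.
set coef := (C in C *: _); suff -> : coef = 0 by rewrite scale0r.
rewrite /coef -[RHS](coord_s x) -[s](subrK (\sum_(p <- ls) p.1 *: i p.2)) raddfD /=.
rewrite free_coord_derived // add0r raddf_sum big_mkcond /=.
apply: eq_bigr => p _; rewrite linearZ /= free_coord_gen.
rewrite -[p.2 == x]/(asbool (p.2 = x)).
by case: asbool; rewrite /= ?scaler0 // [RHS]mulr1.
Qed.
End FreeLieAlgebra.

Section QextPairingFacts.
Variables (R : pzRingType) (q : nat) (G L : lieAlgebra R) (w : G -> G -> L) (b : G -> L).
Hypothesis wb_pairing : qext_pairing q w b.

Lemma qext_w_linearl z : linear (w^~ z).
Proof. by case: wb_pairing => [[wZ wDl _ _] _ _ _ _] a x y; rewrite wDl -(wZ a x z).1. Qed.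

Lemma qext_w_linearr z : linear (w z).
Proof. by case: wb_pairing => [[wZ _ wDr _] _ _ _ _] a x y; rewrite wDr -(wZ a z x).2. Qed.

Lemma qext_w0l z : w 0 z = 0.
Proof.
case: wb_pairing => [[_ wDl _ _] _ _ _ _].
by apply: (addrI (w 0 z)); rewrite -wDl !addr0.
Qed.

Lemma qext_w_anti x y : w y x = - w x y.
Proof.
case: wb_pairing => [[_ wDl wDr wxx] _ _ _ _].
apply/eqP; rewrite -addr_eq0 addrC.
by have := wxx (x + y); rewrite wDl !wDr !wxx add0r addr0 => ->.
Qed.

Lemma qext_wNr x y : w x (- y) = - w x y.
Proof. by case: wb_pairing => [[wZ _ _ _] _ _ _ _]; rewrite -!scaleN1r (wZ _ x y).2. Qed.

Lemma qext_pairing_cocycle : alt_cocycle w.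
Proof.
case: wb_pairing => [[_ _ _ wxx] wBl _ _ _]; split=> [|||x y z].
- exact: qext_w_linearl.
- exact: qext_w_linearr.
- exact: wxx.
- by rewrite (lie_br_anti x z) qext_wNr (qext_w_anti (lie_br x y)) wBl subrr.
Qed.

Lemma qext_b_linear : (0 < q)%N -> linear b.
Proof.
by case: wb_pairing => _ _ _ _ /[apply] [[_ bZ _ _]] a x y; rewrite -[y]scale1r bZ !scale1r.
Qed.
End QextPairingFacts.

Lemma commutator_qext_pairing (R : pzRingType) (q : nat) (G : lieAlgebra R) :
  qext_pairing q (@lie_br R G) (fun h => h *+ q).
Proof.
split; [split| | | |] => //.
- by move=> l h k; rewrite lie_brZl linearZ.
- exact: lie_brDl.
- by move=> h k k'; rewrite raddfD.
- exact: lie_brxx.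
- by move=> h h' k; rewrite lie_br_leibniz addrK.
- move=> h k k'; rewrite lie_br_leibniz (lie_br_anti h k') (lie_br_anti h k) !lie_brNl.
  by rewrite opprK (lie_br_anti (lie_br h k') k) addrC.
- split=> //.
  + by move=> h' h k; apply: lie_br_leibniz.
  + by move=> l l' h h'; rewrite mulrnDl !scalerMnr.
Qed.

Section QextPairingTransport.
Variables (R : pzRingType) (q : nat) (f g L : lieAlgebra R) (d : f -> g).
Hypothesis d_hom : lie_hom d.
#[local] HB.instance Definition _ := GRing.isLinear.Build R f g *:%R d d_hom.1.

Lemma qext_pairing_comp (w : g -> g -> L) (b : g -> L) :
  qext_pairing q w b -> qext_pairing q (fun a a' => w (d a) (d a')) (fun a => b (d a)).
Proof.
have d_br := d_hom.2.
case=> [[wZ wDl wDr wxx] wBl wBr wbr wq]; split; [split| | | |].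
- by move=> l h k; rewrite !linearZ; apply: wZ.
- by move=> h h' k; rewrite raddfD wDl.
- by move=> h k k'; rewrite raddfD wDr.
- by move=> h; apply: wxx.
- by move=> h h' k; rewrite !d_br wBl.
- by move=> h k k'; rewrite !d_br wBr.
- by move=> h k h' k'; rewrite !d_br wbr.
- move=> /wq [bbr bZ bb bq]; split.
  + by move=> h' h k; rewrite !d_br raddfMn bbr.
  + by move=> l l' h h'; rewrite raddfD /= !linearZ bZ.
  + by move=> h h'; rewrite !raddfMn bb.
  + by move=> h k; rewrite d_br bq.
Qed.

Hypothesis d_surj : forall y : g, exists x : f, d x = y.

Lemma qext_pairing_descent (w : g -> g -> L) (b : g -> L) (w' : f -> f -> L) (b' : f -> L) :
  (forall a a', w (d a) (d a') = w' a a') -> (forall a, b (d a) = b' a) ->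
  qext_pairing q w' b' -> qext_pairing q w b.
Proof.
have d_br := d_hom.2.
move=> wd bd [[wZ wDl wDr wxx] wBl wBr wbr wq]; split; [split| | | |].
- move=> l h k; have [a <-] := d_surj h; have [a' <-] := d_surj k.
  by rewrite -!linearZ /= !wd; apply: wZ.
- move=> h h' k; have [a <-] := d_surj h; have [a' <-] := d_surj h'; have [a'' <-] := d_surj k.
  by rewrite -raddfD /= !wd wDl.
- move=> h k k'; have [a <-] := d_surj h; have [a' <-] := d_surj k; have [a'' <-] := d_surj k'.
  by rewrite -raddfD /= !wd wDr.
- by move=> h; have [a <-] := d_surj h; rewrite wd wxx.
- move=> h h' k; have [a <-] := d_surj h; have [a' <-] := d_surj h'; have [a'' <-] := d_surj k.
  by rewrite -!d_br !wd wBl.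
- move=> h k k'; have [a <-] := d_surj h; have [a' <-] := d_surj k; have [a'' <-] := d_surj k'.
  by rewrite -!d_br !wd wBr.
- move=> h k h' k'; have [a <-] := d_surj h; have [a' <-] := d_surj k.
  have [a'' <-] := d_surj h'; have [a''' <-] := d_surj k'.
  by rewrite -!d_br !wd wbr.
- move=> /wq [bbr bZ bb bq]; split.
  + move=> h' h k; have [a' <-] := d_surj h'; have [a <-] := d_surj h.
    have [a'' <-] := d_surj k.
    by rewrite -!raddfMn /= -!d_br bd !wd bbr.
  + move=> l l' h h'; have [a <-] := d_surj h; have [a' <-] := d_surj h'.
    by rewrite -!linearZ -raddfD /= !bd bZ.
  + move=> h h'; have [a <-] := d_surj h; have [a' <-] := d_surj h'.
    by rewrite -!raddfMn /= !bd wd bb.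
  + move=> h k; have [a <-] := d_surj h; have [a' <-] := d_surj k.
    by rewrite -d_br bd wd bq.
Qed.
End QextPairingTransport.

Lemma sharp_decomp (R : pzRingType) (F : lieAlgebra R) (r : F -> Prop) (q : nat) :
  r 0 -> (forall a x y, r x -> r y -> r (a *: x + y)) ->
  forall t, sharp r q t -> exists2 s, r s & Defs.span (lie_brackets r) (t - s *+ q).
Proof.
move=> r0 r_lin t; elim=> [x [[s [y [rs ->]]]|[s [rs ->]]]| |x y _ [sx rx dx] _ [sy ry dy]
  |a x _ [sx rx dx]].
- by exists 0; rewrite // mul0rn subr0; apply: span_gen; exists s, y.
- by exists s; rewrite // subrr; apply: span_0.
- by exists 0; rewrite // mul0rn subr0; apply: span_0.
- exists (sx + sy); first by rewrite -[sx]scale1r; apply: r_lin.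
  by rewrite mulrnDl opprD addrACA; apply: span_add.
- exists (a *: sx); first by rewrite -[_ *: _]addr0; apply: r_lin.
  by rewrite scalerMnr -scalerBr; apply: span_scale.
Qed.

Section PairingLift.
Variables (R : pzRingType) (q : nat) (X : Type) (f g L : lieAlgebra R) (i : X -> f).
Hypothesis f_free : is_free_lie i.
Variables (d : f -> g) (w : g -> g -> L) (b : g -> L).
Hypotheses (d_hom : lie_hom d) (wb_pairing : qext_pairing q w b).

Definition ext_lift : f -> central_ext (qext_pairing_cocycle wb_pairing) :=
  free_lift f_free (L := central_ext (qext_pairing_cocycle wb_pairing))
    (fun x => (0, d (i x))).

Lemma ext_lift_hom : lie_hom ext_lift.
Proof. exact: free_lift_hom. Qed.

Lemma ext_lift_snd a : (ext_lift a).2 = d a.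
Proof.
apply: (free_lie_hom_eq f_free (psi1 := fun a => (ext_lift a).2)) => // [|x].
- exact: lie_hom_comp ext_lift_hom (central_ext_snd_hom _).
- by rewrite /ext_lift free_lift_gen.
Qed.

Definition pairing_lift (a : f) : L := (ext_lift a).1.

Lemma pairing_lift_linear : linear pairing_lift.
Proof. by move=> a x y; rewrite /pairing_lift ext_lift_hom.1. Qed.

HB.instance Definition _ := GRing.isLinear.Build R f L *:%R pairing_lift pairing_lift_linear.

Lemma pairing_lift_br a a' : pairing_lift (lie_br a a') = w (d a) (d a').
Proof. by rewrite /pairing_lift ext_lift_hom.2 /= !ext_lift_snd. Qed.

Lemma pairing_lift_derived_ker s :
  (0 < q)%N -> lie_derived s -> d s = 0 -> pairing_lift s *+ q = 0.
Proof.
move=> q_gt0 s_derived ds0.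
have b_lin := qext_b_linear wb_pairing q_gt0.
have [_ _ _ _ /(_ q_gt0) [_ bZ _ b_br]] := wb_pairing.
pose u (a : f) : L := pairing_lift a *+ q - b (d a).
have u_lin : linear u.
  move=> a x y; rewrite /u pairing_lift_linear d_hom.1 b_lin.
  by rewrite mulrnDl scalerMnr scalerBr opprD addrACA.
have b0 : b 0 = 0 by have := bZ 0 0 0 0; rewrite !scale0r !addr0.
suff : u s = 0 by rewrite /u ds0 b0 subr0.
have u_br x : lie_brackets (fun _ => True) x -> u x = 0.
  by move=> [a [a' [_ ->]]]; rewrite /u pairing_lift_br d_hom.2 b_br subrr.
exact: (linear_span_eq0 u_lin u_br s_derived).
Qed.
End PairingLift.

Section Presentation.
Variables (R : pzRingType) (q : nat) (f g c : lieAlgebra R) (d : f -> g) (pi : f -> c).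
Variable r : f -> Prop.
Hypotheses (d_hom : lie_hom d) (pi_hom : lie_hom pi).
Hypotheses (d_surj : forall y : g, exists x : f, d x = y)
  (pi_surj : forall z : c, exists x : f, pi x = z).
Hypothesis r_ker : forall x, r x <-> d x = 0.
Hypothesis pi_ker : forall x, pi x = 0 <-> sharp r q x.
#[local] HB.instance Definition _ := GRing.isLinear.Build R f g *:%R d d_hom.1.
#[local] HB.instance Definition _ := GRing.isLinear.Build R f c *:%R pi pi_hom.1.

Lemma ker_sharp_decomp t : sharp r q t ->
  exists2 s, d s = 0 & Defs.span (lie_brackets r) (t - s *+ q).
Proof.
have r0 : r 0 by apply/r_ker; apply: raddf0.
have r_lin a x y : r x -> r y -> r (a *: x + y).
  by move=> /r_ker dx /r_ker dy; apply/r_ker; rewrite linearP /= dx dy scaler0 addr0.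
by move=> /(sharp_decomp r0 r_lin) [s /r_ker]; exists s.
Qed.

Lemma qext_center_of_center X (i : X -> f) (f_free : is_free_lie i) :
  q_torsion_free R q -> forall z0, lie_center (pi z0) -> qext_center q (d z0).
Proof.
move=> q_tf z0 z0_central y L w b wb_pairing; have [a <-] := d_surj y.
have [s ds0 t_s] : exists2 s, d s = 0 & Defs.span (lie_brackets r) (lie_br z0 a - s *+ q).
  by apply: ker_sharp_decomp; apply/pi_ker; rewrite pi_hom.2; apply: z0_central.
set phi := pairing_lift f_free d wb_pairing.
have phi_t : phi (lie_br z0 a) = phi s *+ q.
  apply/eqP; rewrite -subr_eq0 -raddfMn -raddfB; apply/eqP.
  apply: (linear_span_eq0 (pairing_lift_linear _ _ _) _ t_s) => _ [s' [y' [/r_ker ds' ->]]].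
  by rewrite (pairing_lift_br f_free d_hom) ds' (qext_w0l wb_pairing).
rewrite -(pairing_lift_br f_free d_hom wb_pairing) -/phi phi_t.
have [->|q_gt0] := posnP q; first by rewrite mulr0n.
apply: (pairing_lift_derived_ker f_free d_hom wb_pairing q_gt0 _ ds0).
apply: (free_lie_derived_pure f_free q_gt0 q_tf).
rewrite -(subKr (lie_br z0 a) (s *+ q)); apply: spanB.
- by apply: span_gen; exists z0, a.
- by apply: span_sub t_s => _ [s' [y' [_ ->]]]; exists s', y'.
Qed.

Lemma pi_br_ker a y : d a = 0 -> pi (lie_br a y) = 0.
Proof. by move=> da0; apply/pi_ker/span_gen; left; exists a, y; split=> //; apply/r_ker. Qed.

Lemma pi_mulrn_ker a : d a = 0 -> pi (a *+ q) = 0.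
Proof. by move=> da0; apply/pi_ker/span_gen; right; exists a; split=> //; apply/r_ker. Qed.

Lemma pi_br_fiber a a' v : d a = d a' -> lie_br (pi a) v = lie_br (pi a') v.
Proof.
move=> daa'; have [y <-] := pi_surj v; apply/eqP; rewrite -subr_eq0 -lie_brBl -raddfB /=.
by rewrite -pi_hom.2 pi_br_ker // raddfB /= daa' subrr.
Qed.

Lemma pi_mulrn_fiber a a' : d a = d a' -> pi a *+ q = pi a' *+ q.
Proof.
move=> daa'; apply/eqP; rewrite -subr_eq0 -mulrnBl -raddfB -raddfMn /=.
by rewrite pi_mulrn_ker // raddfB /= daa' subrr.
Qed.

Definition d_section (h : g) : f :=
  proj1_sig (constructive_indefinite_description _ (d_surj h)).

Lemma d_sectionK h : d (d_section h) = h.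
Proof. exact: proj2_sig (constructive_indefinite_description _ (d_surj h)). Qed.

Definition lifted_br (h k : g) : c := lie_br (pi (d_section h)) (pi (d_section k)).

Definition lifted_qmul (h : g) : c := pi (d_section h) *+ q.

Lemma lifted_br_d a a' : lifted_br (d a) (d a') = lie_br (pi a) (pi a').
Proof.
rewrite /lifted_br (pi_br_fiber _ (d_sectionK (d a))) lie_br_anti.
by rewrite (pi_br_fiber _ (d_sectionK (d a'))) -lie_br_anti.
Qed.

Lemma lifted_qmul_d a : lifted_qmul (d a) = pi a *+ q.
Proof. exact: pi_mulrn_fiber (d_sectionK _). Qed.

Lemma lifted_qext_pairing : qext_pairing q lifted_br lifted_qmul.
Proof.
apply: (qext_pairing_descent d_hom d_surj lifted_br_d lifted_qmul_d).
exact: (qext_pairing_comp pi_hom (commutator_qext_pairing q c)).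
Qed.

Lemma center_of_qext_center z0 : qext_center q (d z0) -> lie_center (pi z0).
Proof.
move=> z0_qcentral v; have [a <-] := pi_surj v.
by rewrite -lifted_br_d; apply: z0_qcentral lifted_qext_pairing.
Qed.
End Presentation.

Theorem corollary6p7 (Lam : comPzRingType) (q : nat) (Htf : q_torsion_free Lam q)
  (g : lieAlgebra Lam)
  (X : Type) (f : lieAlgebra Lam) (i : X -> f) (Hfree : is_free_lie i)
  (d : f -> g) (Hd : lie_hom d) (Hdsurj : forall y : g, exists x : f, d x = y)
  (r : f -> Prop) (Hr : forall x : f, r x <-> d x = 0)
  (c : lieAlgebra Lam) (pi : f -> c) (Hpi : lie_hom pi)
  (Hpisurj : forall z : c, exists x : f, pi x = z)
  (Hker : forall x : f, pi x = 0 <-> sharp r q x)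
  (dbar : c -> g) (Hdbar : forall x : f, dbar (pi x) = d x) :
  forall z : c, lie_center z <-> qext_center q (dbar z).
Proof.
move=> z; have [z0 <-] := Hpisurj z; rewrite Hdbar; split.
- exact: (qext_center_of_center Hd Hpi Hdsurj Hr Hker Hfree Htf).
- exact: (center_of_qext_center Hd Hpi Hdsurj Hpisurj Hr Hker).
Qed.
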